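(* Let $\Gamma\neq\mathbb N$ be a telescopic numerical semigroup. Then $(\mathrm e(\Gamma)-2)\,2^{\mathrm e(\Gamma)}+2\le \mathrm c(\Gamma)$.
   Context: A numerical semigroup is a submonoid of $(\mathbb N,+)$ with finite complement in $\mathbb N$; it has a unique minimal generating system, whose cardinality is the embedding dimension $\mathrm e(\Gamma)$. $\mathrm F(\Gamma)$ is the largest integer not in $\Gamma$, and $\mathrm c(\Gamma)=\mathrm F(\Gamma)+1$. $\langle X\rangle$ is the submonoid generated by $X$. For an arrangement $(r_0,\ldots,r_h)$ of the minimal generators, set $d_k=\gcd(r_0,\ldots,r_{k-1})$. A set $A$ of positive integers with nontrivial partition $A=A_1\cup A_2$ is the gluing of $A_1$ and $A_2$ if $\mathrm{lcm}(\gcd A_1,\gcd A_2)\in\langle A_1\rangle\cap\langle A_2\rangle$. $\Gamma$ is free for $(r_0,\ldots,r_h)$ if $h=0$, or $h\ge1$, $\{r_0,\ldots,r_h\}$ is the gluing of $\{r_0,\ldots,r_{h-1}\}$ and $\{r_h\}$, and $\langle r_0/d_h,\ldots,r_{h-1}/d_h\rangle$ is free for $(r_0/d_h,\ldots,r_{h-1}/d_h)$. $\Gamma$ is telescopic if it is free for the arrangement of its minimal generators in increasing order. *)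

From mathcomp Require Import all_boot.
Set Implicit Arguments. Unset Strict Implicit. Unset Printing Implicit Defensive.

Definition numerical_semigroup (G : nat -> Prop) : Prop :=
  [/\ G 0,
      (forall a b, G a -> G b -> G (a + b)) &
      (exists N, forall n, N <= n -> G n)].

Definition in_gen (s : seq nat) (n : nat) : Prop :=
  exists c : nat -> nat, n = \sum_(i < size s) c i * nth 0 s i.

Definition generates (s : seq nat) (G : nat -> Prop) : Prop :=
  forall n, G n <-> in_gen s n.

(* s (without repetitions) is a minimal generating system of G:
   it generates G and no proper subset does (removing any element breaks it;
   since generation is monotone this is minimality w.r.t. inclusion). *)
Definition minimal_generating_system (G : nat -> Prop) (s : seq nat) : Prop :=
  [/\ uniq s, generates s G &
      forall x, x \in s -> ~ generates (rem x s) G].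

Definition gcd_seq (s : seq nat) : nat := foldr gcdn 0 s.

(* Freeness for an arrangement (r_0,...,r_h), with fuel n >= size s.
   h = 0 : free.  h >= 1 : with d_h = gcd(r_0..r_{h-1}),
   {r_0..r_h} is the gluing of {r_0..r_{h-1}} and {r_h}, i.e.
   lcm(d_h, r_h) lies in <r_0..r_{h-1}> and in <r_h>, and
   (r_0/d_h, ..., r_{h-1}/d_h) is free. *)
Fixpoint free_fuel (n : nat) (s : seq nat) : Prop :=
  match n with
  | 0 => False
  | n'.+1 =>
      if size s == 1 then True
      else
        let t := take (size s).-1 s in
        let r := last 0 s in
        let d := gcd_seq t in
        [/\ 1 < size s,
            in_gen t (lcmn (gcd_seq t) (gcd_seq [:: r])),
            in_gen [:: r] (lcmn (gcd_seq t) (gcd_seq [:: r])) &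
            free_fuel n' (map (fun x => x %/ d) t)]
  end.

Definition free_arrangement (s : seq nat) : Prop := free_fuel (size s) s.

Definition telescopic_with (G : nat -> Prop) (s : seq nat) : Prop :=
  [/\ minimal_generating_system G s, sorted ltn s & free_arrangement s].

From mathcomp Require Import all_boot zify.

Set Implicit Arguments.
Unset Strict Implicit.
Unset Printing Implicit Defensive.

(* If Gamma is free for (r_0, ..., r_h) with d = d_h, then Gamma' = <r_0/d, ..., r_{h-1}/d>
   is free, r_h lies in Gamma', and c(Gamma) = d c(Gamma') + (d - 1)(r_h - 1); here d >= 2
   because r_h is not generated by r_0, ..., r_{h-1}. Moreover 2^(h+1) <= r_h + 1, since
   r_h > r_{h-1} = d (r_{h-1}/d). Induction on h then gives (e - 1) 2^e + 2 <= c + 2^e. *)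

Fixpoint in_mon (s : seq nat) (n : nat) : Prop :=
  match s with
  | [::] => n = 0
  | a :: s' => exists k m, in_mon s' m /\ n = k * a + m
  end.

Lemma in_genE s n : in_gen s n <-> in_mon s n.
Proof.
elim: s n => [|a s IH] n.
  by split => [[c ->]|->]; [rewrite big_ord0 | exists (fun _ => 0); rewrite big_ord0].
split.
  case=> c ->; rewrite big_ord_recl /=.
  exists (c 0), (\sum_(i < size s) c i.+1 * nth 0 s i); split => //.
  by apply/IH; exists (fun i => c i.+1).
case=> k [m [/IH [c ->] ->]].
exists (fun i => if i is j.+1 then c j else k).
by rewrite big_ord_recl.
Qed.

Lemma in_mon0 s : in_mon s 0.
Proof. by elim: s => [|a s IH] //=; exists 0, 0. Qed.

Lemma in_monD s a b : in_mon s a -> in_mon s b -> in_mon s (a + b).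
Proof.
elim: s a b => [|x s IH] a b /=; first by move=> -> ->.
case=> k [m [Hm ->]] [k' [m' [Hm' ->]]].
by exists (k + k'), (m + m'); split; [exact: IH | lia].
Qed.

Lemma in_monM s j a : in_mon s a -> in_mon s (j * a).
Proof.
move=> Ha; elim: j => [|j IH]; first exact: in_mon0.
by rewrite mulSn; apply: in_monD.
Qed.

Lemma in_mon_catl u v m : in_mon u m -> in_mon (u ++ v) m.
Proof.
elim: u m => [|x u IH] m /=; first by move=> ->; apply: in_mon0.
by case=> k [m' [H ->]]; exists k, m'; split => //; apply: IH.
Qed.

Lemma in_mon_cat_cons u x v n :
  in_mon (u ++ x :: v) n <-> exists k m, in_mon (u ++ v) m /\ n = k * x + m.
Proof.
elim: u n => [|y u IH] n //=.
split.
  case=> k [m [/IH [j [m' [Hm' ->]]] ->]].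
  by exists j, (k * y + m'); split; [exists k, m' | lia].
case=> j [m [[k [m' [Hm' ->]]] ->]].
by exists k, (j * x + m'); split; [apply/IH; exists j, m' | lia].
Qed.

Lemma in_mon_rcons t r n :
  in_mon (rcons t r) n <-> exists k m, in_mon t m /\ n = k * r + m.
Proof. by rewrite -cats1 in_mon_cat_cons cats0. Qed.

Lemma in_mon_scale t d n :
  in_mon (map (fun x => x * d) t) n <-> exists m, in_mon t m /\ n = m * d.
Proof.
elim: t n => [|y t IH] n /=.
  by split => [->|[m [-> ->]]]; [exists 0|].
split.
  case=> k [m [/IH [m' [Hm' ->]] ->]].
  by exists (k * y + m'); split; [exists k, m' | rewrite mulnDl mulnA].
case=> m [[k [m' [Hm' ->]]] ->].
by exists k, (m' * d); split; [apply/IH; exists m' | rewrite mulnDl mulnA].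
Qed.

Lemma gcd_seq_rcons t r : gcd_seq (rcons t r) = gcdn (gcd_seq t) r.
Proof.
elim: t => [|x t IH] /=; first by rewrite /gcd_seq /= gcdn0 gcd0n.
by rewrite /gcd_seq /= in IH *; rewrite IH gcdnA.
Qed.

Lemma dvdn_gcd_seq s x : x \in s -> gcd_seq s %| x.
Proof.
elim: s => [|y s IH] //=; rewrite in_cons => /orP [/eqP ->|/IH].
  exact: dvdn_gcdl.
exact/dvdn_trans/dvdn_gcdr.
Qed.

Lemma dvdn_gcd_seq_in_mon s n : in_mon s n -> gcd_seq s %| n.
Proof.
elim: s n => [|y s IH] n /=; first by move=> ->.
case=> k [m [/IH Hm ->]]; apply: dvdn_add.
  exact/dvdn_mull/dvdn_gcdl.
exact: dvdn_trans (dvdn_gcdr _ _) Hm.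
Qed.

Lemma gcd_seq_scale t d : gcd_seq (map (fun x => x * d) t) = gcd_seq t * d.
Proof.
elim: t => [|y t IH] //=.
by rewrite /gcd_seq /= in IH *; rewrite IH muln_gcdl.
Qed.

Lemma gcd_seq_divK t (d := gcd_seq t) :
  map (fun x => x * d) (map (fun x => x %/ d) t) = t.
Proof.
rewrite -map_comp -[RHS]map_id; apply/eq_in_map => x /dvdn_gcd_seq.
exact: divnK.
Qed.

Definition independent (s : seq nat) :=
  forall k, k < size s -> ~ in_mon (take k s) (nth 0 s k).

Lemma independent_rcons t r :
  independent (rcons t r) -> independent t /\ ~ in_mon t r.
Proof.
have take_t k : k <= size t -> take k (rcons t r) = take k t.
  by move=> Hk; rewrite -cats1 takel_cat.
move=> Hind; split=> [k Hk|].
  have := Hind k; rewrite size_rcons nth_rcons take_t ?Hk; last exact: ltnW.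
  by apply; exact: ltnW.
by have := Hind (size t); rewrite size_rcons nth_rcons ltnn eqxx take_t // take_size; apply.
Qed.

Lemma independent_gt0 s x : independent s -> x \in s -> 0 < x.
Proof.
move=> Hind /(nthP 0) [k Hk <-]; rewrite lt0n; apply/eqP => H0.
by apply: (Hind k Hk); rewrite H0; exact: in_mon0.
Qed.

Lemma independent_unscale t d :
  independent (map (fun x => x * d) t) -> independent t.
Proof.
move=> Hind k Hk Hin; apply: (Hind k); first by rewrite size_map.
rewrite -map_take (nth_map 0) //.
by apply/in_mon_scale; exists (nth 0 t k).
Qed.

Lemma minimal_generating_system_independent G s :
  minimal_generating_system G s -> independent s.
Proof.
case=> Hu Hgen Hmin k Hk Hin.
set x := nth 0 s k in Hin.
apply: (Hmin x (mem_nth 0 Hk)) => n.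
rewrite remE index_uniq // Hgen !in_genE.
have Es : s = take k s ++ x :: drop k.+1 s by rewrite /x -(drop_nth 0 Hk) cat_take_drop.
rewrite {1}Es in_mon_cat_cons; split=> [[j [m [Hm ->]]] | Hn].
  by apply: in_monD => //; apply/in_monM/in_mon_catl.
by exists 0, n.
Qed.

Lemma generates_cofinite_gcd G s N :
  generates s G -> (forall n, N <= n -> G n) -> gcd_seq s = 1.
Proof.
move=> Hgen HN.
have dvd_gcd n : N <= n -> gcd_seq s %| n.
  by move/HN/Hgen/in_genE; exact: dvdn_gcd_seq_in_mon.
apply/eqP; rewrite -dvdn1 -(dvdn_addr 1 (dvd_gcd N (leqnn N))) addn1.
exact: dvd_gcd.
Qed.

(* The gap [c(Gamma') - 1] of [Gamma'] yields the gap [d c(Gamma') + (d - 1) r - d]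
   of the gluing. *)
Lemma glue_gap t d r c n :
  0 < d -> coprime d r -> in_mon t r -> (0 < c -> ~ in_mon t c.-1) ->
  n + d = d * c + (d - 1) * r ->
  ~ in_mon (rcons (map (fun x => x * d) t) r) n.
Proof.
move=> d_gt0 cop_dr Hr Hc En /in_mon_rcons [k [_ [/in_mon_scale [m [Hm ->]] Ekm]]].
have Ek := divn_eq k d; set q := k %/ d in Ek; set k0 := k %% d in Ek.
have k0_lt : k0 < d by rewrite ltn_pmod.
have Eq : d * c + (d - 1 - k0) * r = d * (q * r + m + 1).
  have : k0 * r <= (d - 1) * r by rewrite leq_mul2r; apply/orP; right; lia.
  move: En; rewrite Ekm Ek mulnDl [q * d]mulnC -mulnA [m * d]mulnC.
  rewrite !mulnBl !mulnDr mul1n muln1; lia.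
have k0_max : d - 1 - k0 = 0.
  have : d %| (d - 1 - k0) * r.
    by rewrite -(dvdn_addr _ (dvdn_mulr c (dvdnn d))) Eq dvdn_mulr.
  rewrite Gauss_dvdl // => /dvdn_leq; lia.
move: Eq; rewrite k0_max mul0n addn0 => /eqP; rewrite eqn_pmul2l // => /eqP Ec.
apply: Hc; first by rewrite Ec addn1.
by rewrite Ec addn1 /=; apply: in_monD => //; apply: in_monM.
Qed.

Lemma glue_conductor_bound k P d c r :
  0 < k -> 1 < d -> k.-1 * P + 2 <= c + P -> 2 * P <= r.+1 ->
  k * (2 * P) + 2 <= d * c + (d - 1) * (r - 1) + 2 * P.
Proof.
move=> k_gt0 d_gt1 Hc Hr.
have : 2 * c <= d * c by rewrite leq_mul2r d_gt1 orbT.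
have : r - 1 <= (d - 1) * (r - 1) by rewrite leq_pmull // subn_gt0.
have -> : k * (2 * P) = 2 * (k.-1 * P) + 2 * P.
  by rewrite -(prednK k_gt0) mulSn mulnCA addnC.
lia.
Qed.

Lemma glue_factor_gt1 t r (d := gcd_seq t) :
  0 < size t -> independent t -> ~ in_mon t r -> in_mon t (d * r) -> 1 < d.
Proof.
move=> t_gt0 t_ind r_ind Hdr.
have t0 : nth 0 t 0 \in t by rewrite mem_nth.
have d_gt0 : 0 < d.
  rewrite lt0n; apply/eqP => d0; have := dvdn_gcd_seq t0.
  by rewrite -/d d0 dvd0n => /eqP x0; have := independent_gt0 t_ind t0; rewrite x0.
rewrite ltn_neqAle d_gt0 andbT; apply: contra_notN r_ind => /eqP d1.
by rewrite -d1 mul1n in Hdr.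
Qed.

(* [c] is a lower bound for the conductor ([c = 0] when the monoid is all of N); the second
   conjunct is (e - 2) 2^e + 2 <= c written without truncated subtraction, so that it also
   holds for e = 1. *)
Lemma free_conductor_bound n s :
  free_fuel n s -> sorted ltn s -> gcd_seq s = 1 -> independent s -> 0 < size s ->
  exists c, [/\ 0 < c -> ~ in_mon s c.-1,
              (size s).-1 * 2 ^ size s + 2 <= c + 2 ^ size s &
              2 ^ size s <= (last 0 s).+1].
Proof.
elim: n s => [|n IH] s //=.
case: ifP => [/eqP s1 _ _ Hg _ _ | _].
  case: s s1 Hg => [|a [|]] //= _; rewrite /gcd_seq /= gcdn0 => ->.
  by exists 0; split.
case/lastP: s => [|t r] [s_gt1 Hglue _ Hfree] // Hsort Hg Hind _.
have Et : take (size (rcons t r)).-1 (rcons t r) = t.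
  by rewrite size_rcons -cats1 take_size_cat.
rewrite Et size_rcons last_rcons gcdn0 in Hglue Hfree s_gt1 *.
set d := gcd_seq t in Hglue Hfree; set t' := map _ t in Hfree.
have Ht : t = map (fun x => x * d) t' by rewrite gcd_seq_divK.
have t_gt0 : 0 < size t by [].
have size_t : size t = size t' by rewrite size_map.
have t'_gt0 : 0 < size t' by rewrite -size_t.
have [t_sorted t_last] : sorted ltn t /\ last 0 t < r.
  by case: (t) s_gt1 Hsort => [|a u] //= _; rewrite rcons_path => /andP.
have [t_ind r_ind] := independent_rcons Hind.
have cop_dr : coprime d r by rewrite /coprime -gcd_seq_rcons Hg.
move: Hglue; rewrite /lcmn (eqP cop_dr) divn1 in_genE => Hdr.
have d_gt1 : 1 < d := glue_factor_gt1 t_gt0 t_ind r_ind Hdr.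
have d_gt0 := ltnW d_gt1.
have Hr : in_mon t' r.
  by move: Hdr; rewrite {1}Ht => /in_mon_scale [m [Hm /eqP]]; rewrite mulnC eqn_pmul2r // => /eqP ->.
have t'_sorted : sorted ltn t'.
  by move: t_sorted; rewrite Ht sorted_map; apply: sub_sorted => x y /=; rewrite ltn_pmul2r.
have t'_gcd : gcd_seq t' = 1.
  by apply/eqP; rewrite -(eqn_pmul2r d_gt0) mul1n -gcd_seq_scale -Ht.
have t'_ind : independent t' by apply: (@independent_unscale _ d); rewrite -Ht.
have [c [Hgap Hbound Hlast]] := IH t' Hfree t'_sorted t'_gcd t'_ind t'_gt0.
have r_big : 2 * 2 ^ size t' <= r.+1.
  have : last 0 t = last 0 t' * d by rewrite Ht -(last_map (fun x => x * d)) mul0n.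
  have : last 0 t' * 2 <= last 0 t' * d by rewrite leq_mul2l d_gt1 orbT.
  lia.
have d_r : (d - 1) * (r - 1) + (d - 1) = (d - 1) * r.
  by rewrite -mulnSr; congr (_ * _); lia.
exists (d * c + (d - 1) * (r - 1)); split; rewrite ?size_t ?expnS //.
- by move=> c_gt0; rewrite Ht; apply: glue_gap Hgap _ => //; lia.
- exact: glue_conductor_bound.
Qed.

Theorem proposition4p2 (G : nat -> Prop) (s : seq nat) (F : nat) :
  numerical_semigroup G ->
  (exists n, ~ G n) ->
  telescopic_with G s ->
  ~ G F -> (forall n, F < n -> G n) ->
  (size s - 2) * 2 ^ size s + 2 <= F.+1.
Proof.
move=> [G0 _ [N HN]] _ [Hmin Hsort Hfree] GF HF.
have [_ Hgen _] := Hmin.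
have Hg := generates_cofinite_gcd Hgen HN.
have s_gt0 : 0 < size s by case: (s) Hg.
have s_ind := minimal_generating_system_independent Hmin.
have [c [Hgap Hbound _]] := free_conductor_bound Hfree Hsort Hg s_ind s_gt0.
have F_gt0 : 0 < F by rewrite lt0n; apply: contra_notN GF => /eqP ->.
have c_le : c <= F.+1.
  case: (posnP c) => [-> // | c_gt0].
  rewrite -(prednK c_gt0) ltnS leqNgt; apply/negP => /HF /Hgen /in_genE.
  exact: Hgap.
case: (ltnP (size s) 2) => [s_lt2 | s_ge2].
  by have -> : size s - 2 = 0 by lia.
have E : (size s).-1 = (size s - 2).+1 by lia.
rewrite E mulSn in Hbound; lia.
Qed.
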